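(* Let $U\subset\mathbb R^m$ be compact, let $f:U\to\mathbb R$, and define $f^*(t)=\max_{u\in U}\{\langle u,t\rangle-f(u)\}$. Let $\mathcal X=\mathcal X_1\times\cdots\times\mathcal X_n$ be a block-structured parameter set and let $E(\bm\theta)=(E_1(\bm\theta),\dots,E_m(\bm\theta))$ with $E_j:\mathcal X\to\mathbb R$. Suppose that for each $j\in\{1,\dots,m\}$ and each block $i\in\{1,\dots,n\}$ there are functions $a_{ij},b_{ij}$ with $E_j(\bm\theta)=a_{ij}(\theta_i;\bar{\bm\theta}_i)-b_{ij}(\theta_i;\bar{\bm\theta}_i)$ for all $\bm\theta$, where $a_{ij}(\cdot;\bar{\bm\theta}_i)$ and $b_{ij}(\cdot;\bar{\bm\theta}_i)$ are convex in $\theta_i$ for each fixed $\bar{\bm\theta}_i$. For $j=1,\dots,m$ let $\underline u_j=\min_{u\in U}u_j$, $\bar u_j=\max_{u\in U}u_j$, $c_j^+=\max\{-\underline u_j,0\}$, $d_j^+=\max\{\bar u_j,0\}$, and let $c^+,d^+\in\mathbb R^m$ be the vectors with these components. Write $a_i=(a_{i1},\dots,a_{im})$, $b_i=(b_{i1},\dots,b_{im})$, and define $h_i(\theta_i;\bar{\bm\theta}_i)=\langle c^+,a_i(\theta_i;\bar{\bm\theta}_i)\rangle+\langle d^+,b_i(\theta_i;\bar{\bm\theta}_i)\rangle$, $g_i(\theta_i;\bar{\bm\theta}_i)=f^*(E(\bm\theta))+h_i(\theta_i;\bar{\bm\theta}_i)$. Then for every $i$, $f^*(E(\bm\theta))=g_i(\theta_i;\bar{\bm\theta}_i)-h_i(\theta_i;\bar{\bm\theta}_i)$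 with $g_i(\cdot;\bar{\bm\theta}_i)$ and $h_i(\cdot;\bar{\bm\theta}_i)$ convex in $\theta_i$ for every fixed $\bar{\bm\theta}_i$; in particular $f^*\circ E$ is BDC.
   Context: Block notation: for $\bm\theta\in\mathcal X$, $\theta_i$ is its $i$th block and $\bar{\bm\theta}_i$ is the vector obtained from $\bm\theta$ by setting the $i$th block to zero. A function is BDC if for every block $i$ it can be written as $g_i(\theta_i;\bar{\bm\theta}_i)-h_i(\theta_i;\bar{\bm\theta}_i)$ with both functions convex in $\theta_i$ for each fixed $\bar{\bm\theta}_i$. *)

From HB Require Import structures.
From mathcomp Require Import all_boot all_order all_algebra.
From mathcomp Require Import all_classical all_reals all_analysis.
Set Implicit Arguments. Unset Strict Implicit. Unset Printing Implicit Defensive.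
Import Order.TTheory GRing.Theory Num.Theory.
Import numFieldNormedType.Exports.
Local Open Scope classical_set_scope.
Local Open Scope ring_scope.

Section Defs.
Variable R : realType.

Definition dotv (m : nat) (u t : 'rV[R]_m) : R := \sum_(j < m) u 0 j * t 0 j.

(* Convex conjugate f^*(t) = max_{u in U} (<u,t> - f u), written as a sup
   (equal to the max whenever the max is attained). *)
Definition conj_fun (m : nat) (U : set 'rV[R]_m) (f : 'rV[R]_m -> R)
  (t : 'rV[R]_m) : R := sup [set dotv u t - f u | u in U].

(* Parameters live in R^N, coordinates partitioned into n blocks by blk.
   x and y have the same \bar\theta_i iff they agree outside block i. *)
Definition same_off_block (N n : nat) (blk : 'I_N -> 'I_n) (i : 'I_n)
  (x y : 'rV[R]_N) : Prop := forall k, blk k != i -> x 0 k = y 0 k.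

Definition block_convex (N n : nat) (X : set 'rV[R]_N) (blk : 'I_N -> 'I_n)
  (i : 'I_n) (F : 'rV[R]_N -> R) : Prop :=
  forall x y (t : R), X x -> X y -> same_off_block blk i x y ->
    0 <= t -> t <= 1 -> X (t *: x + (1 - t) *: y) ->
    F (t *: x + (1 - t) *: y) <= t * F x + (1 - t) * F y.

Definition BDC (N n : nat) (X : set 'rV[R]_N) (blk : 'I_N -> 'I_n)
  (F : 'rV[R]_N -> R) : Prop :=
  forall i : 'I_n, exists g h : 'rV[R]_N -> R,
    (forall th, X th -> F th = g th - h th) /\
    block_convex X blk i g /\ block_convex X blk i h.

Definition ulow (m : nat) (U : set 'rV[R]_m) (j : 'I_m) : R :=
  inf [set u 0 j | u in U].
Definition uhigh (m : nat) (U : set 'rV[R]_m) (j : 'I_m) : R :=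
  sup [set u 0 j | u in U].
Definition cplus (m : nat) (U : set 'rV[R]_m) : 'rV[R]_m :=
  \row_j Num.max (- ulow U j) 0.
Definition dplus (m : nat) (U : set 'rV[R]_m) : 'rV[R]_m :=
  \row_j Num.max (uhigh U j) 0.

Definition Evec (m N : nat) (E : 'I_m -> 'rV[R]_N -> R) (th : 'rV[R]_N)
  : 'rV[R]_m := \row_j E j th.

Definition hfun (m N n : nat) (U : set 'rV[R]_m)
  (a b : 'I_n -> 'I_m -> 'rV[R]_N -> R) (i : 'I_n) (th : 'rV[R]_N) : R :=
  dotv (cplus U) (\row_j a i j th) + dotv (dplus U) (\row_j b i j th).

Definition gfun (m N n : nat) (U : set 'rV[R]_m) (f : 'rV[R]_m -> R)
  (E : 'I_m -> 'rV[R]_N -> R)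
  (a b : 'I_n -> 'I_m -> 'rV[R]_N -> R) (i : 'I_n) (th : 'rV[R]_N) : R :=
  conj_fun U f (Evec E th) + hfun U a b i th.

End Defs.

From HB Require Import structures.
From mathcomp Require Import all_boot all_order all_algebra.
From mathcomp Require Import all_classical all_reals all_analysis.
From mathcomp Require Import ring lra.
Set Implicit Arguments. Unset Strict Implicit. Unset Printing Implicit Defensive.
Import Order.TTheory GRing.Theory Num.Theory.
Import numFieldNormedType.Exports.
Local Open Scope classical_set_scope.
Local Open Scope ring_scope.

(* For a fixed u in U, theta |-> <u, E theta> + h_i theta equals
   sum_j (u_j + c_j^+) a_ij + (d_j^+ - u_j) b_ij, a combination with
   nonnegative coefficients because -c^+ <= u <= d^+ on U; it is therefore
   block convex.  Subtracting f u and maximising over u gives g_i, and a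
   function touched from below at every point by a block-convex minorant is
   block convex. *)

Section BlockConvex.
Variables (R : realType) (N n : nat) (X : set 'rV[R]_N) (blk : 'I_N -> 'I_n).
Variable i : 'I_n.

Lemma block_convex_ext (F G : 'rV[R]_N -> R) :
  (forall th, X th -> F th = G th) ->
  block_convex X blk i F -> block_convex X blk i G.
Proof.
move=> FG hF x y t Xx Xy sxy t0 t1 Xz; rewrite -!FG //; exact: hF.
Qed.

Lemma block_convex_cst (c : R) : block_convex X blk i (fun=> c).
Proof. by move=> x y t _ _ _ _ _ _; rewrite -mulrDl addrC subrK mul1r. Qed.

Lemma block_convex_add (F G : 'rV[R]_N -> R) :
  block_convex X blk i F -> block_convex X blk i G ->
  block_convex X blk i (fun th => F th + G th).
Proof.
move=> hF hG x y t Xx Xy sxy t0 t1 Xz.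
rewrite !mulrDr addrACA; apply: lerD; [exact: hF | exact: hG].
Qed.

Lemma block_convex_scale (p : R) (F : 'rV[R]_N -> R) :
  0 <= p -> block_convex X blk i F -> block_convex X blk i (fun th => p * F th).
Proof.
move=> p0 hF x y t Xx Xy sxy t0 t1 Xz.
rewrite mulrCA [(1 - t) * _]mulrCA -mulrDr.
by apply: ler_wpM2l => //; exact: hF.
Qed.

Lemma block_convex_sum (I : Type) (r : seq I) (F : I -> 'rV[R]_N -> R) :
  (forall j, block_convex X blk i (F j)) ->
  block_convex X blk i (fun th => \sum_(j <- r) F j th).
Proof.
move=> hF; elim: r => [|j r IH].
  by apply: (block_convex_ext _ (block_convex_cst 0)) => th _; rewrite big_nil.
apply: (block_convex_ext _ (block_convex_add (hF j) IH)) => th _.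
by rewrite big_cons.
Qed.

Lemma block_convex_of_minorants (G : 'rV[R]_N -> R) :
  (forall z, X z -> exists2 phi, block_convex X blk i phi &
     phi z = G z /\ forall th, X th -> phi th <= G th) ->
  block_convex X blk i G.
Proof.
move=> hG x y t Xx Xy sxy t0 t1 Xz.
have [phi phiC [<- phiG]] := hG _ Xz.
apply: (le_trans (phiC x y t Xx Xy sxy t0 t1 Xz)).
by apply: lerD; apply: ler_wpM2l; rewrite ?subr_ge0 //; exact: phiG.
Qed.

End BlockConvex.

Section Conjugate.
Variables (R : realType) (m : nat) (U : set 'rV[R]_m) (f : 'rV[R]_m -> R).

Lemma conj_fun_attained t u :
  U u -> (forall v, U v -> dotv v t - f v <= dotv u t - f u) ->
  conj_fun U f t = dotv u t - f u.
Proof.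
move=> Uu hu; apply/le_anti/andP; split.
  by apply: ge_sup; [exists (dotv u t - f u), u | move=> _ [v Uv <-]; exact: hu].
apply: sup_upper_bound; last by exists u.
split; first by exists (dotv u t - f u), u.
by exists (dotv u t - f u) => _ [v Uv <-]; exact: hu.
Qed.

Lemma conj_fun_ge t u :
  (exists2 w, U w & forall v, U v -> dotv v t - f v <= dotv w t - f w) ->
  U u -> dotv u t - f u <= conj_fun U f t.
Proof. by move=> [w Uw hw] Uu; rewrite (conj_fun_attained Uw hw); exact: hw. Qed.

Lemma coord_image_bounded (j : 'I_m) : compact U ->
  has_lbound [set v 0 j | v in U] /\ has_ubound [set v 0 j | v in U].
Proof.
move=> cU.
have cS : compact [set v 0 j | v in U].
  by apply: continuous_compact => //; apply: continuous_subspaceT; exact: coord_continuous.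
have [M [_ MS]] := compact_bounded cS.
have hM y : [set v 0 j | v in U] y -> - (M + 1) <= y <= M + 1.
  by move=> Sy; rewrite -ler_norml; apply: (MS (M + 1)) => //; rewrite ltrDl.
by split; [exists (- (M + 1)) | exists (M + 1)] => y /hM /andP[].
Qed.

Lemma ulow_le_coord (j : 'I_m) u : compact U -> U u -> ulow U j <= u 0 j.
Proof.
move=> cU Uu; have [lb _] := coord_image_bounded j cU.
by apply: ge_inf => //; exists u.
Qed.

Lemma coord_le_uhigh (j : 'I_m) u : compact U -> U u -> u 0 j <= uhigh U j.
Proof.
move=> cU Uu; have [_ ub] := coord_image_bounded j cU.
by apply: sup_upper_bound; [split; first exists (u 0 j), u | exists u].
Qed.

Lemma cplus_ge0 (j : 'I_m) : 0 <= cplus U 0 j.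
Proof. by rewrite mxE le_max lexx orbT. Qed.

Lemma dplus_ge0 (j : 'I_m) : 0 <= dplus U 0 j.
Proof. by rewrite mxE le_max lexx orbT. Qed.

Lemma coord_add_cplus_ge0 (j : 'I_m) u : compact U -> U u -> 0 <= u 0 j + cplus U 0 j.
Proof.
move=> cU Uu; have := ulow_le_coord j cU Uu.
have : - ulow U j <= cplus U 0 j by rewrite mxE le_max lexx.
lra.
Qed.

Lemma dplus_sub_coord_ge0 (j : 'I_m) u : compact U -> U u -> 0 <= dplus U 0 j - u 0 j.
Proof.
move=> cU Uu; have := coord_le_uhigh j cU Uu.
have : uhigh U j <= dplus U 0 j by rewrite mxE le_max lexx.
lra.
Qed.

End Conjugate.

Section Proposition.
Variables (R : realType) (m N n : nat) (U : set 'rV[R]_m) (f : 'rV[R]_m -> R).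
Variables (X : set 'rV[R]_N) (blk : 'I_N -> 'I_n) (E : 'I_m -> 'rV[R]_N -> R).
Variables (a b : 'I_n -> 'I_m -> 'rV[R]_N -> R) (i : 'I_n).
Hypothesis abC : forall j, block_convex X blk i (a i j) /\ block_convex X blk i (b i j).

Lemma block_convex_nonneg_comb (p q : 'I_m -> R) :
  (forall j, 0 <= p j) -> (forall j, 0 <= q j) ->
  block_convex X blk i (fun th => \sum_(j < m) (p j * a i j th + q j * b i j th)).
Proof.
move=> p0 q0; apply: block_convex_sum => j; have [aC bC] := abC j.
by apply: block_convex_add; apply: block_convex_scale.
Qed.

Lemma hfun_sum th :
  hfun U a b i th = \sum_(j < m) (cplus U 0 j * a i j th + dplus U 0 j * b i j th).
Proof. by rewrite /hfun /dotv -big_split; apply: eq_bigr => j _; rewrite !mxE. Qed.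

Lemma hfun_block_convex : block_convex X blk i (hfun U a b i).
Proof.
apply: (block_convex_ext (fun th _ => esym (hfun_sum th))).
exact: block_convex_nonneg_comb (@cplus_ge0 _ _ U) (@dplus_ge0 _ _ U).
Qed.

Hypothesis E_diff : forall j th, X th -> E j th = a i j th - b i j th.

Lemma dotv_Evec_add_hfun u th : X th ->
  dotv u (Evec E th) + hfun U a b i th =
  \sum_(j < m) ((u 0 j + cplus U 0 j) * a i j th + (dplus U 0 j - u 0 j) * b i j th).
Proof.
move=> Xth; rewrite hfun_sum /dotv -big_split /=; apply: eq_bigr => j _.
by rewrite mxE E_diff //; ring.
Qed.

Hypothesis U_compact : compact U.
Hypothesis conj_max : forall t : 'rV[R]_m, exists2 u, U u &
  forall v, U v -> dotv v t - f v <= dotv u t - f u.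

Lemma gfun_block_convex : block_convex X blk i (gfun U f E a b i).
Proof.
apply: block_convex_of_minorants => z Xz.
have [u Uu hu] := conj_max (Evec E z).
exists (fun th => dotv u (Evec E th) + hfun U a b i th - f u).
  have sumC : block_convex X blk i (fun th => \sum_(j < m)
      ((u 0 j + cplus U 0 j) * a i j th + (dplus U 0 j - u 0 j) * b i j th) - f u).
    apply: block_convex_add; last exact: block_convex_cst.
    apply: block_convex_nonneg_comb => j.
      exact: coord_add_cplus_ge0.
    exact: dplus_sub_coord_ge0.
  by apply: (block_convex_ext _ sumC) => th Xth; rewrite dotv_Evec_add_hfun.
split; first by rewrite /gfun (conj_fun_attained Uu hu) addrAC.
move=> th _; have := conj_fun_ge (conj_max (Evec E th)) Uu.
by rewrite /gfun; lra.
Qed.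

End Proposition.

Theorem proposition3p4 (R : realType) (m N n : nat)
  (U : set 'rV[R]_m) (f : 'rV[R]_m -> R)
  (X : set 'rV[R]_N) (blk : 'I_N -> 'I_n)
  (E : 'I_m -> 'rV[R]_N -> R) (a b : 'I_n -> 'I_m -> 'rV[R]_N -> R) :
  compact U -> U !=set0 ->
  (forall t : 'rV[R]_m, exists2 u, U u &
     forall v, U v -> dotv v t - f v <= dotv u t - f u) ->
  (forall i j th, X th -> E j th = a i j th - b i j th) ->
  (forall i j, block_convex X blk i (a i j) /\ block_convex X blk i (b i j)) ->
  (forall i : 'I_n,
     (forall th, X th ->
        conj_fun U f (Evec E th) = gfun U f E a b i th - hfun U a b i th) /\
     block_convex X blk i (gfun U f E a b i) /\
     block_convex X blk i (hfun U a b i)) /\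
  BDC X blk (fun th => conj_fun U f (Evec E th)).
Proof.
(* Nonemptiness of U is implied by the attainment hypothesis. *)
move=> cU _ conj_max E_diff abC.
have split_i i th : conj_fun U f (Evec E th) = gfun U f E a b i th - hfun U a b i th.
  by rewrite /gfun addrK.
have convex_i i : block_convex X blk i (gfun U f E a b i) /\
                  block_convex X blk i (hfun U a b i).
  split; last exact: hfun_block_convex (abC i).
  exact: gfun_block_convex (abC i) (E_diff i) cU conj_max.
split=> i; first by split; [move=> th _; exact: split_i | exact: convex_i].
exists (gfun U f E a b i), (hfun U a b i).
by split; [move=> th _; exact: split_i | exact: convex_i].
Qed.
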